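(* Suppose $p=1$, or $p>1$ and $d_{\mathcal Y}(y_1,y_2)\le\max\{d_{\mathcal Y}(y_1,y_0),d_{\mathcal Y}(y_0,y_2)\}$ for all $y_1,y_2\in\mathcal Y$. Let $0\le m\le n\le l$ with $n\ge1$ and let $([m],v,e),([n],w,f)$ be graphs with attributes in $\mathcal X,\mathcal Y$. Extend $([m],v,e)$ to $([l],v,e)$ by $v_i=x_*$ for $m+1\le i\le l$ and $e_{ii'}=y_0$ whenever $\max\{i,i'\}\ge m+1$, and extend $([n],w,f)$ to $([l],w,f)$ by $w_i=x'_*$ for $n+1\le i\le l$ and $f_{ii'}=y_0$ whenever $\max\{i,i'\}\ge n+1$. Then $$d_{\mathbb G,R_2}(([m],v,e),([n],w,f))\le\Big(D_l\big(([l],v,e),([l],w,f)\big)^p+C_{\mathcal Y}^p\frac{n-m}{n}\Big)^{1/p}.$$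
   Context: $(\mathcal X,d_{\mathcal X})$, $(\mathcal Y,d_{\mathcal Y})$ are pseudometric spaces with $\mathrm{diam}(\mathcal X)\le C_{\mathcal X}$, $\mathrm{diam}(\mathcal Y)\le C_{\mathcal Y}$, $y_0\in\mathcal Y$ a distinguished ''no edge'' element, $p\ge1$, $C_2^p\ge C_{\mathcal X}^p+C_{\mathcal Y}^p$. Two new points $x_*,x'_*$ are adjoined to $\mathcal X$ with $d_{\mathcal X}(x_*,x)^p=d_{\mathcal X}(x,x_* )^p=C_2^p-C_{\mathcal Y}^p$ and $d_{\mathcal X}(x'_*,x)=d_{\mathcal X}(x,x'_* )=d_{\mathcal X}(x_*,x'_* )=d_{\mathcal X}(x'_*,x_* )=C_2$ for all $x\in\mathcal X$ (zero self-distances). A graph $([n],v,e)$ has vertex map into $\mathcal X\cup\{x_*,x'_*\}$ and symmetric $e:[n]^2\to\mathcal Y$ with $e_{ii}=y_0$; $S_n$ is the set of permutations of $[n]=\{1,\dots,n\}$. GOSPA2 distance (order $p$, penalty $C_2$; graphs with attributes in $\mathcal X$): for $n\ge\max\{m,1\}$, with $0/0:=0$, $$d_{\mathbb G,R_2}(([m],v,e),([n],w,f))=n^{-1/p}\min_{\pi\in S_n}\Big[(n-m)C_2^p+\sum_{i\in[m]}d_{\mathcal X}(v_i,w_{\pi(i)})^p+\frac{1}{2(n-1)}\Big(\sum_{(i,i')\in[m]^2}d_{\mathcal Y}(e_{ii'},f_{\pi(i)\pi(i')})^p+\sum_{(i,i')\in[n]^2\setminus[m]^2}d_{\mathcal Y}(y_0,f_{\pi(i)\pi(i')})^p\Big)\Big]^{1/p}.$$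 For two graphs of equal size $N\ge1$ (attributes in the extended spaces), $$D_N\big(([N],a,g),([N],b,h)\big)=N^{-1/p}\min_{\pi\in S_N}\Big[\sum_{i\in[N]}d_{\mathcal X}(a_i,b_{\pi(i)})^p+\frac{1}{2(N-1)}\sum_{(i,i')\in[N]^2}d_{\mathcal Y}(g_{ii'},h_{\pi(i)\pi(i')})^p\Big]^{1/p}.$$ *)

From HB Require Import structures.
From mathcomp Require Import all_boot all_order all_algebra all_fingroup.
From mathcomp Require Import all_classical all_reals all_analysis.
Set Implicit Arguments. Unset Strict Implicit. Unset Printing Implicit Defensive.
Import Order.TTheory GRing.Theory Num.Theory.
Local Open Scope ring_scope.

Record pseudometric (R : realType) (T : Type) (d : T -> T -> R) : Prop := {
  pm_ge0 : forall x y, 0 <= d x y;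
  pm_refl : forall x, d x x = 0;
  pm_sym : forall x y, d x y = d y x;
  pm_tri : forall x y z, d x z <= d x y + d y z }.

Inductive xext (X : Type) := XIn of X | XStar | XStar'.
Arguments XStar {X}.
Arguments XStar' {X}.

Definition dXext (R : realType) (X : Type) (dX : X -> X -> R) (p C2 CY : R)
    (a b : xext X) : R :=
  match a, b with
  | XIn x, XIn x' => dX x x'
  | XStar, XStar => 0
  | XStar', XStar' => 0
  | XStar, XIn _ => (C2 `^ p - CY `^ p) `^ p^-1
  | XIn _, XStar => (C2 `^ p - CY `^ p) `^ p^-1
  | _, _ => C2
  end.

(* Graphs on [k] = {0,...,k-1} are encoded by vertex maps nat -> X and edge maps
   nat -> nat -> Y; only values at indices < k matter. *)

(* GOSPA2 distance d_{G,R_2}(([m],v,e),([n],w,f)), for n >= max(m,1). *)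
Definition gospa2 (R : realType) (X Y : Type) (dX : X -> X -> R) (dY : Y -> Y -> R)
    (y0 : Y) (p C2 : R) (m n : nat) (v : nat -> X) (e : nat -> nat -> Y)
    (w : nat -> X) (f : nat -> nat -> Y) : R :=
  let F := fun s : 'S_n =>
    (n - m)%:R * C2 `^ p
    + \sum_(i < n | (i < m)%N) dX (v i) (w (s i)) `^ p
    + (2 * (n - 1)%:R)^-1 *
      (\sum_(i < n) \sum_(i' < n | (i < m)%N && (i' < m)%N)
          dY (e i i') (f (s i) (s i')) `^ p
       + \sum_(i < n) \sum_(i' < n | ~~ ((i < m)%N && (i' < m)%N))
          dY y0 (f (s i) (s i')) `^ p) in
  n%:R `^ (- p^-1) * (\big[Num.min/F 1%g]_(s : 'S_n) F s) `^ p^-1.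

Definition Dgraph (R : realType) (A Y : Type) (dA : A -> A -> R) (dY : Y -> Y -> R)
    (p : R) (N : nat) (a : nat -> A) (g : nat -> nat -> Y)
    (b : nat -> A) (h : nat -> nat -> Y) : R :=
  let F := fun s : 'S_N =>
    \sum_(i < N) dA (a i) (b (s i)) `^ p
    + (2 * (N - 1)%:R)^-1 *
      \sum_(i < N) \sum_(i' < N) dY (g i i') (h (s i) (s i')) `^ p in
  N%:R `^ (- p^-1) * (\big[Num.min/F 1%g]_(s : 'S_N) F s) `^ p^-1.

Definition ext_v (X : Type) (k : nat) (v : nat -> X) (star : xext X) : nat -> xext X :=
  fun i => if (i < k)%N then XIn (v i) else star.
Definition ext_e (Y : Type) (k : nat) (y0 : Y) (e : nat -> nat -> Y) : nat -> nat -> Y :=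
  fun i i' => if (i < k)%N && (i' < k)%N then e i i' else y0.

From HB Require Import structures.
From mathcomp Require Import all_boot all_order all_algebra all_fingroup.
From mathcomp Require Import all_classical all_reals all_analysis.
From mathcomp Require Import ring lra.
Set Implicit Arguments. Unset Strict Implicit. Unset Printing Implicit Defensive.
Import Order.TTheory GRing.Theory Num.Theory.
Local Open Scope ring_scope.

(* Fix a matching t of the two extended graphs, i.e. a permutation of [l].
   Vertices j < n with t j < n keep their partner; the other j < n take, in
   some order, the partners t gives to the indices of [n, l) that t sends into
   [n].  This yields a permutation s of [n] and an injection rho : [n] -> [l]
   with t (rho j) = s j, the identity wherever t j < n.  Splitting the penalty
   C2^p of an unmatched vertex as (C2^p - CY^p) + CY^p, the vertex cost of j
   under s is at most the extended vertex cost at rho j, and each of the l - n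
   indices outside the image of rho costs C2^p.  An edge pair not fixed by rho
   is split through y0 by the triangle inequality for dY^p, and its two halves
   sit at disjoint positions of the extended edge cost.  With the bound
   n (n - 1) CY^p on the edge cost of s, an elementary comparison of the
   weights 1/(2(n-1)) and 1/(2(l-1)) gives l (cost(s) - (n - m) CY^p) <=
   n cost(t); minimizing over t and taking p-th roots proves the theorem. *)

Lemma perm_extend (T : finType) (D : {set T}) (g : T -> T) :
  {in D &, injective g} -> exists s : {perm T}, {in D, s =1 g}.
Proof.
move=> g_inj.
pose sD := enum (~: D); pose sI := enum (~: (g @: D)).
have size_sI : size sI = size sD.
  by rewrite -!cardE; apply/eqP; rewrite -(eqn_add2l #|g @: D|) cardsC card_in_imset // cardsC.
pose h x := nth x sI (index x sD).
have h_out x : x \notin D -> h x \notin g @: D.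
  move=> xD; have : h x \in sI by rewrite mem_nth // size_sI index_mem mem_enum inE.
  by rewrite mem_enum inE.
pose s0 x := if x \in D then g x else h x.
have s0_inj : injective s0.
  move=> x y; rewrite /s0.
  case: ifPn => xD; case: ifPn => yD.
  - exact: g_inj.
  - by move=> gxhy; case/negP: (h_out y yD); rewrite -gxhy imset_f.
  - by move=> hxgy; case/negP: (h_out x xD); rewrite hxgy imset_f.
  have sD_mem z : z \notin D -> z \in sD by rewrite /sD mem_enum inE.
  have idx z : z \notin D -> (index z sD < size sI)%N.
    by move=> zD; rewrite size_sI index_mem sD_mem.
  rewrite /h (set_nth_default y _ (idx x xD)) => /eqP.
  rewrite nth_uniq ?enum_uniq ?idx // => /eqP.
  by move=> e; rewrite -(nth_index x (sD_mem _ xD)) e nth_index ?sD_mem.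
by exists (perm s0_inj) => x xD; rewrite permE /s0 xD.
Qed.

Section Restriction.
Variables (n l : nat) (le_nl : (n <= l)%N).
Local Notation widen := (widen_ord le_nl).

Lemma exists_perm_restriction (t : 'S_l) :
  exists (s : 'S_n) (rho : 'I_n -> 'I_l),
    (forall j, t (rho j) = widen (s j)) /\
    (forall j, (t (widen j) < n)%N -> rho j = widen j).
Proof.
pose g j : 'I_n := insubd j (t (widen j)).
have gE j : (t (widen j) < n)%N -> widen (g j) = t (widen j).
  by move=> lt_tj; apply: val_inj; rewrite /= insubdK.
have [s sE] : exists s : 'S_n, {in [set j | t (widen j) < n]%N, s =1 g}.
  apply: perm_extend => i j; rewrite !inE => lt_ti lt_tj gij.
  have : t (widen i) = t (widen j) by rewrite -gE // -[RHS]gE // gij.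
  by move/perm_inj/(congr1 val) => /= /val_inj.
exists s, (fun j => (t^-1)%g (widen (s j))); split=> [j|j lt_tj]; first by rewrite permKV.
by rewrite sE ?inE // gE // permK.
Qed.

Variables (t : 'S_l) (s : 'S_n) (rho : 'I_n -> 'I_l).
Hypothesis t_rho : forall j, t (rho j) = widen (s j).
Hypothesis rho_id : forall j, (t (widen j) < n)%N -> rho j = widen j.

Lemma restriction_inj : injective rho.
Proof.
by move=> i j /(congr1 t); rewrite !t_rho => /(congr1 val) /= /val_inj /perm_inj.
Qed.

Lemma restriction_lt j : (t (rho j) < n)%N.
Proof. by rewrite t_rho /= ltn_ord. Qed.

Lemma restriction_ge j : (n <= t (widen j))%N -> (n <= rho j)%N.
Proof.
move=> ge_tj; rewrite leqNgt; apply/negP => lt_rj.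
pose k : 'I_n := Ordinal lt_rj.
have wk : widen k = rho j by apply: val_inj.
have /restriction_inj kj : rho k = rho j by rewrite rho_id wk ?restriction_lt.
by move: ge_tj; rewrite -kj wk leqNgt restriction_lt.
Qed.

Lemma restriction_imset : [set rho j | j : 'I_n] = [set i | t i < n]%N.
Proof.
apply/setP => i; rewrite inE; apply/imsetP/idP => [[j _ ->]|lt_ti].
  exact: restriction_lt.
exists ((s^-1)%g (Ordinal lt_ti)) => //; apply: (@perm_inj _ t).
by rewrite t_rho permKV; apply: val_inj.
Qed.

End Restriction.

Lemma powR_triangle_through (R : realType) (Y : Type) (dY : Y -> Y -> R) (y0 : Y) (p : R) :
  pseudometric dY -> 1 <= p ->
  (p = 1 \/ (1 < p /\ forall y1 y2, dY y1 y2 <= Num.max (dY y1 y0) (dY y0 y2))) ->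
  forall y1 y2, dY y1 y2 `^ p <= dY y1 y0 `^ p + dY y0 y2 `^ p.
Proof.
move=> pm p1 [->|[_ ultra]] y1 y2.
  by rewrite !powRr1 ?(pm_ge0 pm) //; apply: pm_tri.
have powR_le y y' : dY y1 y2 <= dY y y' -> dY y1 y2 `^ p <= dY y y' `^ p.
  by move=> le_d; apply: ge0_ler_powR; rewrite ?nnegrE ?(pm_ge0 pm) //; lra.
have := ultra y1 y2; rewrite le_max => /orP[/powR_le|/powR_le] le_d.
  by apply: (le_trans le_d); rewrite lerDl powR_ge0.
by apply: (le_trans le_d); rewrite lerDr powR_ge0.
Qed.

Lemma sumr_disjoint_images_le (R : realType) (T I J : finType) (F : T -> R)
    (g : I -> T) (h : J -> T) (P : pred I) :
  (forall x, 0 <= F x) -> injective g -> injective h ->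
  (forall i j, P i -> g i != h j) ->
  \sum_(i | P i) F (g i) + \sum_j F (h j) <= \sum_x F x.
Proof.
move=> F_ge0 g_inj h_inj gh_disj.
rewrite -(big_imset F (in2W g_inj)) -(big_imset F (in2W h_inj)) -bigU /=.
  rewrite [leRHS]big_mkcond /= big_mkcond /=; apply: ler_sum => x _.
  by case: ifP => // _; apply: F_ge0.
apply/pred0P => x /=; apply/andP => -[/imsetP[i Pi ->] /imsetP[j _ /eqP]].
by rewrite (negbTE (gh_disj i j Pi)).
Qed.

Lemma sum_offdiag_le (R : realType) (n : nat) (F : 'I_n -> 'I_n -> R) (K : R) :
  (forall i, F i i = 0) -> (forall i j, F i j <= K) ->
  \sum_i \sum_j F i j <= n%:R * (n - 1)%:R * K.
Proof.
move=> F_diag F_le.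
have row_le i : \sum_j F i j <= (n - 1)%:R * K.
  rewrite (bigD1 i) //= F_diag add0r.
  apply: le_trans (ler_sum _ (fun j _ => F_le i j)) _.
  by rewrite sumr_const cardC1 card_ord subn1 mulr_natl.
have -> : n%:R * (n - 1)%:R * K = \sum_(i < n) ((n - 1)%:R * K).
  by rewrite sumr_const card_ord -mulrA mulr_natl.
exact: ler_sum.
Qed.

Lemma edge_weight_le (R : realType) (n l : nat) : (1 <= n)%N -> (n <= l)%N ->
  (l%:R / (2 * (n - 1)%:R) - n%:R / (2 * (l - 1)%:R)) * (n - 1)%:R <= (l - n)%:R :> R.
Proof.
case: n => [|[|n]] // _ le_nl; first by rewrite subnn mulr0 ler0n.
have le2l : (2 <= l)%N by apply: leq_trans le_nl.
have gapL : 0 <= (l%:R - n.+2%:R) * (l%:R - n.+2%:R - 1) :> R.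
  have [<-|ne_nl] := eqVneq n.+2 l; first by rewrite subrr mul0r.
  have : (n.+3 <= l)%N by rewrite ltn_neqAle ne_nl le_nl.
  rewrite -(ler_nat R) -natr1 => lt_nl; apply: mulr_ge0; lra.
rewrite !natrB ?(ltnW le2l) //.
set N := n.+2%:R in gapL *; set L := l%:R in gapL *.
have N2 : 2 <= N by rewrite ler_nat.
have NL : N <= L by rewrite ler_nat.
have halfN : (N - 1) / (2 * (N - 1)) = 2^-1 by rewrite invfM mulrCA mulfV ?mulr1 //; lra.
(* 2 (L - 1) (N - L / 2) = N (N - 1) - (L - N) (L - N - 1) *)
have quad : N - L / 2 <= N * (N - 1) / (2 * (L - 1)).
  by rewrite ler_pdivlMr; nra.
rewrite mulrBl mulrAC -mulrA halfN mulrAC.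
lra.
Qed.

Lemma cost_transfer_le (R : realType) (n l : nat) (V E V' E' C K : R) :
  (1 <= n)%N -> (n <= l)%N -> 0 <= K ->
  V <= n%:R * (C - K) -> 0 <= E -> E <= n%:R * (n - 1)%:R * K ->
  V + (l - n)%:R * C <= V' -> E <= E' ->
  l%:R * (V + (2 * (n - 1)%:R)^-1 * E) <= n%:R * (V' + (2 * (l - 1)%:R)^-1 * E').
Proof.
move=> n_ge1 le_nl K_ge0 V_le E_ge0 E_le V'_ge E'_ge.
have := edge_weight_le R n_ge1 le_nl.
have b_ge0 : 0 <= (2 * (l - 1)%:R)^-1 :> R by rewrite invr_ge0 mulr_ge0 ?ler0n.
rewrite natrB // in V'_ge *.
set a := (2 * (n - 1)%:R)^-1; set b := (2 * (l - 1)%:R)^-1 in b_ge0 *.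
set N := n%:R in V_le E_le V'_ge *; set L := l%:R in V'_ge *; set M := (n - 1)%:R in E_le *.
have N_ge0 : 0 <= N by rewrite ler0n.
have M_ge0 : 0 <= M by rewrite ler0n.
have NL : N <= L by rewrite ler_nat.
move=> W_le; set W := L * a - N * b in W_le.
have WE : W * E <= N * (L - N) * K.
  have NLK_ge0 : 0 <= N * (L - N) * K by rewrite !mulr_ge0 // subr_ge0.
  have [W_le0|W_gt0] := lerP W 0.
    by apply: le_trans NLK_ge0; rewrite mulr_le0_ge0.
  apply: le_trans (_ : W * (N * M * K) <= _); first by rewrite ler_wpM2l // ltW.
  have -> : W * (N * M * K) = W * M * (N * K) by ring.
  have -> : N * (L - N) * K = (L - N) * (N * K) by ring.
  by rewrite ler_wpM2r // mulr_ge0.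
(* The difference of the two sides is t1 + t2 + t3 + t4. *)
have t1 : 0 <= N * (V' - V - (L - N) * C) by rewrite mulr_ge0 // subr_ge0 lerBrDr addrC.
have t2 : 0 <= N * b * (E' - E) by rewrite !mulr_ge0 // subr_ge0.
have t3 : 0 <= (L - N) * (N * (C - K) - V) by rewrite mulr_ge0 // subr_ge0.
have t4 : 0 <= N * (L - N) * K - W * E by rewrite subr_ge0.
rewrite /W in t4; lra.
Qed.

Lemma bigmin_transfer_le (R : realType) (I J : finType) (i0 : I) (j0 : J)
    (G : I -> R) (F : J -> R) (a b d : R) :
  0 <= a -> 0 < b -> (forall j, exists i, a * (G i - d) <= b * F j) ->
  a * (\big[Num.min/G i0]_i G i - d) <= b * \big[Num.min/F j0]_j F j.
Proof.
move=> a_ge0 b_gt0 GF; rewrite -ler_pdivrMl //.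
have le_F j : b^-1 * (a * (\big[Num.min/G i0]_i G i - d)) <= F j.
  have [i le_ij] := GF j; rewrite ler_pdivrMl //; apply: le_trans le_ij.
  by rewrite ler_wpM2l // lerD2r bigmin_le.
by apply: le_bigmin => // j _.
Qed.

Lemma normalized_powR_le (R : realType) (n l : nat) (p M M' d K : R) :
  (0 < n)%N -> (0 < l)%N -> 0 < p -> 0 <= M -> 0 <= M' ->
  l%:R * (M - d * K) <= n%:R * M' ->
  n%:R `^ (- p^-1) * M `^ p^-1 <=
  ((l%:R `^ (- p^-1) * M' `^ p^-1) `^ p + K * (d / n%:R)) `^ p^-1.
Proof.
move=> n_gt0 l_gt0 p_gt0 M_ge0 M'_ge0 le_MM'.
have scaleE (k : nat) : k%:R `^ (- p^-1) = (k%:R^-1) `^ p^-1 :> R.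
  by rewrite -mulN1r powRrM powR_inv1.
have N_gt0 : 0 < n%:R :> R by rewrite ltr0n.
have [Ni_ge0 Li_ge0] : 0 <= n%:R^-1 :> R /\ 0 <= l%:R^-1 :> R by rewrite !invr_ge0 !ler0n.
have L_gt0 : 0 < l%:R :> R by rewrite ltr0n.
have le_avg : n%:R^-1 * M <= l%:R^-1 * M' + K * (d / n%:R).
  have : n%:R^-1 * (M - d * K) <= l%:R^-1 * M'.
    by rewrite ler_pdivrMl // mulrCA ler_pdivlMl // mulrC.
  have -> : K * (d / n%:R) = n%:R^-1 * (d * K) by rewrite mulrC mulrAC mulrC.
  lra.
rewrite !scaleE -!powRM // -powRrM mulVf ?gt_eqF // powRr1 ?mulr_ge0 //.
have avg_ge0 : 0 <= n%:R^-1 * M by rewrite mulr_ge0.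
apply: ge0_ler_powR => //; first by rewrite invr_ge0 ltW.
by rewrite nnegrE (le_trans avg_ge0 le_avg).
Qed.

Section GraphExtension.
Variables (R : realType) (X Y : Type) (dX : X -> X -> R) (dY : Y -> Y -> R) (y0 : Y).
Variables (p CX CY C2 : R) (m n l : nat).
Variables (v : nat -> X) (e : nat -> nat -> Y) (w : nat -> X) (f : nat -> nat -> Y).
Hypotheses (pX : pseudometric dX) (pY : pseudometric dY).
Hypotheses (dX_le : forall x x', dX x x' <= CX) (dY_le : forall y y', dY y y' <= CY).
Hypotheses (p_ge1 : 1 <= p) (C2_ge : CX `^ p + CY `^ p <= C2 `^ p).
Hypothesis dY_powR_triangle : forall y1 y2, dY y1 y2 `^ p <= dY y1 y0 `^ p + dY y0 y2 `^ p.
Hypotheses (le_mn : (m <= n)%N) (le_nl : (n <= l)%N) (n_gt0 : (0 < n)%N).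
Hypothesis e_diag : forall i, (i < m)%N -> e i i = y0.
Hypothesis f_diag : forall i, (i < n)%N -> f i i = y0.

Local Notation v' := (ext_v m v XStar).
Local Notation w' := (ext_v n w XStar').
Local Notation e' := (ext_e m y0 e).
Local Notation f' := (ext_e n y0 f).
Local Notation dext := (dXext dX p C2 CY).
Local Notation widen := (widen_ord le_nl).

(* The penalty C2^p of each of the n - m unmatched vertices is split as
   (C2^p - CY^p) + CY^p; node_cost carries the first part. *)
Definition node_cost (s : 'S_n) (j : 'I_n) : R :=
  if (j < m)%N then dX (v j) (w (s j)) `^ p else C2 `^ p - CY `^ p.

Definition edge_cost (s : 'S_n) : R :=
  \sum_(i < n) \sum_(i' < n) dY (e' i i') (f' (s i) (s i')) `^ p.

Definition node_term (t : 'S_l) (i : 'I_l) : R := dext (v' i) (w' (t i)) `^ p.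

Definition edge_term (t : 'S_l) (i i' : 'I_l) : R := dY (e' i i') (f' (t i) (t i')) `^ p.

Definition gospa2_cost (s : 'S_n) : R :=
  (n - m)%:R * C2 `^ p
  + \sum_(i < n | (i < m)%N) dX (v i) (w (s i)) `^ p
  + (2 * (n - 1)%:R)^-1 *
    (\sum_(i < n) \sum_(i' < n | (i < m)%N && (i' < m)%N)
        dY (e i i') (f (s i) (s i')) `^ p
     + \sum_(i < n) \sum_(i' < n | ~~ ((i < m)%N && (i' < m)%N))
        dY y0 (f (s i) (s i')) `^ p).

Definition Dgraph_cost (t : 'S_l) : R :=
  \sum_i node_term t i + (2 * (l - 1)%:R)^-1 * \sum_i \sum_i' edge_term t i i'.

Lemma gospa2E : gospa2 dX dY y0 p C2 m n v e w f =
  n%:R `^ (- p^-1) * (\big[Num.min/gospa2_cost 1%g]_s gospa2_cost s) `^ p^-1.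
Proof. by []. Qed.

Lemma DgraphE : Dgraph dext dY p l v' e' w' f' =
  l%:R `^ (- p^-1) * (\big[Num.min/Dgraph_cost 1%g]_t Dgraph_cost t) `^ p^-1.
Proof. by []. Qed.

Lemma p_gt0 : 0 < p.
Proof. exact: lt_le_trans ltr01 p_ge1. Qed.

Lemma dX_powR_le x x' : dX x x' `^ p <= C2 `^ p - CY `^ p.
Proof.
rewrite lerBrDr; apply: le_trans C2_ge; rewrite lerD2r.
have dX_ge0 := pm_ge0 pX x x'.
by apply: ge0_ler_powR; rewrite ?nnegrE ?(le_trans dX_ge0 (dX_le x x')) ?(ltW p_gt0).
Qed.

Lemma dY_powR_le y y' : dY y y' `^ p <= CY `^ p.
Proof.
have dY_ge0 := pm_ge0 pY y y'.
by apply: ge0_ler_powR; rewrite ?nnegrE ?(le_trans dY_ge0 (dY_le y y')) ?(ltW p_gt0).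
Qed.

Lemma dXext_star_powR x : dext XStar (XIn x) `^ p = C2 `^ p - CY `^ p.
Proof.
rewrite /= -powRrM mulVf ?powRr1 ?gt_eqF ?p_gt0 //.
by apply: le_trans (dX_powR_le x x); apply: powR_ge0.
Qed.

Lemma node_cost_le s j : node_cost s j <= C2 `^ p - CY `^ p.
Proof. by rewrite /node_cost; case: ifP => // _; apply: dX_powR_le. Qed.

Lemma edge_cost_le s : edge_cost s <= n%:R * (n - 1)%:R * CY `^ p.
Proof.
apply: sum_offdiag_le => [i|i i']; last exact: dY_powR_le.
have -> : e' i i = y0 by rewrite /ext_e; case: ifP => // /andP[/e_diag].
by rewrite /ext_e !ltn_ord f_diag ?ltn_ord // (pm_refl pY) powR0 ?gt_eqF ?p_gt0.
Qed.

Lemma powR_gap_ge0 : 0 <= C2 `^ p - CY `^ p.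
Proof. by rewrite subr_ge0 (le_trans _ C2_ge) // lerDr powR_ge0. Qed.

Lemma node_cost_ge0 s j : 0 <= node_cost s j.
Proof. by rewrite /node_cost; case: ifP => _; rewrite ?powR_ge0 ?powR_gap_ge0. Qed.

Lemma gospa2_costE s :
  gospa2_cost s =
  (n - m)%:R * CY `^ p + \sum_j node_cost s j + (2 * (n - 1)%:R)^-1 * edge_cost s.
Proof.
have nodesE : \sum_j node_cost s j = \sum_(j < n | (j < m)%N) dX (v j) (w (s j)) `^ p
    + (n - m)%:R * (C2 `^ p - CY `^ p).
  rewrite (bigID (fun j : 'I_n => (j < m)%N)) /=; congr (_ + _).
    by apply: eq_bigr => j lt_jm; rewrite /node_cost lt_jm.
  rewrite (eq_bigr (fun=> C2 `^ p - CY `^ p)); last first.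
    by move=> j /negbTE ge_jm; rewrite /node_cost ge_jm.
  rewrite (eq_bigl (fun j : 'I_n => xpredT (j : nat) && (m <= j)%N)) => [|j];
    last by rewrite -leqNgt.
  by rewrite -(big_geq_mkord m n xpredT (fun=> C2 `^ p - CY `^ p)) sumr_const_nat mulr_natl.
have edgesE : edge_cost s =
    \sum_(i < n) \sum_(i' < n | (i < m)%N && (i' < m)%N) dY (e i i') (f (s i) (s i')) `^ p
    + \sum_(i < n) \sum_(i' < n | ~~ ((i < m)%N && (i' < m)%N)) dY y0 (f (s i) (s i')) `^ p.
  rewrite /edge_cost -big_split; apply: eq_bigr => i _.
  rewrite (bigID (fun i' : 'I_n => (i < m)%N && (i' < m)%N)) /=.
  by congr (_ + _); apply: eq_bigr => i' P; rewrite /ext_e ?(negbTE P) ?P !ltn_ord.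
by rewrite /gospa2_cost nodesE edgesE; ring.
Qed.

Lemma gospa2_cost_ge0 s : 0 <= gospa2_cost s.
Proof.
rewrite gospa2_costE !addr_ge0 ?mulr_ge0 ?invr_ge0 ?ler0n ?powR_ge0 //.
  by apply: sumr_ge0 => j _; apply: node_cost_ge0.
by apply: sumr_ge0 => i _; apply: sumr_ge0 => i' _; apply: powR_ge0.
Qed.

Lemma Dgraph_cost_ge0 t : 0 <= Dgraph_cost t.
Proof.
rewrite /Dgraph_cost addr_ge0 ?mulr_ge0 ?invr_ge0 ?ler0n //.
  by apply: sumr_ge0 => i _; apply: powR_ge0.
by apply: sumr_ge0 => i _; apply: sumr_ge0 => i' _; apply: powR_ge0.
Qed.

Section Comparison.
Variables (t : 'S_l) (s : 'S_n) (rho : 'I_n -> 'I_l).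
Hypotheses (t_rho : forall j, t (rho j) = widen (s j))
  (rho_id : forall j, (t (widen j) < n)%N -> rho j = widen j).

Lemma node_cost_le_term j : node_cost s j <= node_term t (rho j).
Proof.
rewrite /node_term t_rho /ext_v /= ltn_ord.
have [lt_tj|ge_tj] := ltnP (t (widen j)) n.
  rewrite rho_id //= /node_cost; case: ifP => _ //.
  by rewrite dXext_star_powR.
have /negbTE -> : ~~ (rho j < m)%N.
  by rewrite -leqNgt (leq_trans le_mn) // (restriction_ge t_rho rho_id).
by rewrite dXext_star_powR node_cost_le.
Qed.

Lemma node_costs_le :
  \sum_j node_cost s j + (l - n)%:R * C2 `^ p <= \sum_i node_term t i.
Proof.
rewrite (bigID (mem [set rho j | j : 'I_n])) /= big_imset /=; last first.
  exact: in2W (restriction_inj t_rho).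
apply: lerD; first by apply: ler_sum => j _; apply: node_cost_le_term.
rewrite (eq_bigr (fun=> C2 `^ p)); last first.
  move=> i; rewrite (restriction_imset t_rho) inE => /negbTE ge_ti.
  by rewrite /node_term /ext_v ge_ti; case: ifP.
have card_im : #|[set rho j | j : 'I_n]| = n.
  by rewrite card_imset ?card_ord //; apply: restriction_inj t_rho.
have card_out : #|(fun i : 'I_l => i \notin [set rho j | j : 'I_n])| = (l - n)%N.
  by rewrite -[l in RHS]card_ord -(cardC [set rho j | j : 'I_n]) card_im addKn.
by rewrite sumr_const card_out mulr_natl.
Qed.

Lemma edge_term_le (i i' : 'I_n) :
  dY (e' i i') (f' (s i) (s i')) `^ p <=
  (if ~~ ((t (widen i) < n) && (t (widen i') < n))%N
   then edge_term t (widen i) (widen i') else 0) + edge_term t (rho i) (rho i').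
Proof.
rewrite /edge_term !t_rho /=.
case: ifPn => [out|/negPn/andP[/rho_id -> /rho_id ->]]; last by rewrite add0r.
have out_m k : ~~ (t (widen k) < n)%N -> ~~ (rho k < m)%N.
  by rewrite -!leqNgt => /(restriction_ge t_rho rho_id); apply: leq_trans.
have -> : e' (rho i) (rho i') = y0.
  by rewrite /ext_e; case/nandP: out => /out_m/negbTE ->; rewrite ?andbF.
have -> : f' (t (widen i)) (t (widen i')) = y0 by rewrite /ext_e (negbTE out).
exact: dY_powR_triangle.
Qed.

Lemma edge_cost_le_terms : edge_cost s <= \sum_i \sum_i' edge_term t i i'.
Proof.
have rho_inj := restriction_inj t_rho.
pose out (q : 'I_n * 'I_n) := ~~ ((t (widen q.1) < n) && (t (widen q.2) < n))%N.
apply: le_trans (_ : \sum_(q | out q) edge_term t (widen q.1) (widen q.2)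
  + \sum_q edge_term t (rho q.1) (rho q.2) <= _).
  rewrite /edge_cost pair_big (big_mkcond out) -big_split /=.
  by apply: ler_sum => q _; apply: edge_term_le.
rewrite pair_big /=.
apply: (sumr_disjoint_images_le (F := fun x : 'I_l * 'I_l => edge_term t x.1 x.2)
  (g := fun q => (widen q.1, widen q.2)) (h := fun q => (rho q.1, rho q.2))).
- by move=> x; apply: powR_ge0.
- by move=> [i i'] [j j'] [/val_inj -> /val_inj ->].
- by move=> [i i'] [j j'] [/rho_inj -> /rho_inj ->].
- move=> [i i'] [j j'] /=; rewrite /out /=.
  by apply: contra => /eqP[-> ->]; rewrite !(restriction_lt t_rho).
Qed.

Lemma gospa2_cost_transfer :
  l%:R * (gospa2_cost s - (n - m)%:R * CY `^ p) <= n%:R * Dgraph_cost t.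
Proof.
have -> : gospa2_cost s - (n - m)%:R * CY `^ p =
    \sum_j node_cost s j + (2 * (n - 1)%:R)^-1 * edge_cost s.
  by rewrite gospa2_costE; ring.
apply: (cost_transfer_le (C := C2 `^ p) (K := CY `^ p)) => //.
- by rewrite powR_ge0.
- apply: le_trans (ler_sum _ (fun j _ => node_cost_le s j)) _.
  by rewrite sumr_const card_ord mulr_natl.
- by apply: sumr_ge0 => i _; apply: sumr_ge0 => i' _; apply: powR_ge0.
- exact: edge_cost_le.
- exact: node_costs_le.
- exact: edge_cost_le_terms.
Qed.

End Comparison.

Theorem gospa2_le_Dgraph_ext :
  gospa2 dX dY y0 p C2 m n v e w f <=
  (Dgraph dext dY p l v' e' w' f' `^ p + CY `^ p * ((n - m)%:R / n%:R)) `^ p^-1.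
Proof.
rewrite gospa2E DgraphE; apply: normalized_powR_le.
- exact: n_gt0.
- exact: leq_trans n_gt0 le_nl.
- exact: p_gt0.
- by apply: le_bigmin => [|s _]; apply: gospa2_cost_ge0.
- by apply: le_bigmin => [|t _]; apply: Dgraph_cost_ge0.
apply: bigmin_transfer_le; rewrite ?ler0n ?ltr0n // => t.
have [s [rho [t_rho rho_id]]] := exists_perm_restriction le_nl t.
by exists s; apply: gospa2_cost_transfer t_rho rho_id.
Qed.

End GraphExtension.

Theorem lemmaD (R : realType) (X Y : Type) (dX : X -> X -> R) (dY : Y -> Y -> R)
    (y0 : Y) (p CX CY C2 : R) (m n l : nat)
    (v : nat -> X) (e : nat -> nat -> Y) (w : nat -> X) (f : nat -> nat -> Y) :
  pseudometric dX -> pseudometric dY ->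
  0 <= CX -> 0 <= CY -> 0 <= C2 ->
  (forall x x', dX x x' <= CX) -> (forall y y', dY y y' <= CY) ->
  1 <= p -> CX `^ p + CY `^ p <= C2 `^ p ->
  (p = 1 \/ (1 < p /\ forall y1 y2, dY y1 y2 <= Num.max (dY y1 y0) (dY y0 y2))) ->
  (m <= n)%N -> (n <= l)%N -> (1 <= n)%N ->
  (forall i i', (i < m)%N -> (i' < m)%N -> e i i' = e i' i) ->
  (forall i, (i < m)%N -> e i i = y0) ->
  (forall i i', (i < n)%N -> (i' < n)%N -> f i i' = f i' i) ->
  (forall i, (i < n)%N -> f i i = y0) ->
  gospa2 dX dY y0 p C2 m n v e w f <=
  (Dgraph (dXext dX p C2 CY) dY p l
      (ext_v m v XStar) (ext_e m y0 e) (ext_v n w XStar') (ext_e n y0 f) `^ p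
   + CY `^ p * ((n - m)%:R / n%:R)) `^ p^-1.
Proof.
move=> pX pY _ _ _ dX_le dY_le p_ge1 C2_ge dY_ultra le_mn le_nl n_gt0 _ e_diag _ f_diag.
apply: (gospa2_le_Dgraph_ext v w pX pY dX_le dY_le p_ge1 C2_ge) => //.
exact: powR_triangle_through pY p_ge1 dY_ultra.
Qed.
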